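(* Let $D=C_1\cup\dots\cup C_k$ be a cycle of spheres in a smooth oriented 4-manifold $X$, with self-intersection numbers $s_i=[C_i]\cdot[C_i]$ and length $r(D)=k$. Then: (1) at most three components of $D$ are homologous in $X$, and there are three homologous components only if $r(D)=3$; (2) there is a pair of homologous components only if $r(D)\le 4$; (3) if $[C_i]=[C_{i+1}]$ for some $i$, then either $r(D)=3$ and $s_i=s_{i+1}=1$, or $r(D)=2$ and $s_i=s_{i+1}=2$.
   Context: A cycle of spheres is a union $D=C_1\cup\dots\cup C_k$, $k\ge2$, of closed embedded oriented smooth spheres in $X$, cyclically labelled (indices mod $k$), intersecting transversally and positively with no triple points, such that for $k\ge3$ each $C_i$ meets exactly $C_{i-1}$ and $C_{i+1}$, each in one point, and for $k=2$ the spheres $C_1,C_2$ meet in exactly two points. Homology classes are taken in $H_2(X;\mathbb{Z})$. *)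

From mathcomp Require Import all_boot all_order all_algebra.
Set Implicit Arguments. Unset Strict Implicit. Unset Printing Implicit Defensive.
Import GRing.Theory.

(* Homological model of a cycle of spheres D = C_1 u ... u C_k (indices in 'I_k,
   i.e. taken mod k; [ordS i] is the cyclic successor i+1 mod k).

   [cycle_meet k i j] is the number of (transverse, positive) intersection points
   of C_i and C_j for i <> j, as prescribed by the definition of a cycle of spheres:
   - k = 2 : C_1 and C_2 meet in exactly two points;
   - k >= 3: C_i meets exactly C_{i-1} and C_{i+1}, each in one point,
             and is disjoint from the other components. *)
Definition cycle_meet (k : nat) (i j : 'I_k) : nat :=
  if k == 2 then 2
  else if (j == ordS i) || (i == ordS j) then 1 else 0.

Definition intersection_form (H : zmodType) (form : H -> H -> int) : Prop :=
  (forall x y : H, form x y = form y x) /\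
  (forall x y z : H, form (x + y)%R z = (form x z + form y z)%R).

From mathcomp Require Import all_boot all_order all_algebra.
Set Implicit Arguments. Unset Strict Implicit. Unset Printing Implicit Defensive.

(* Homologous components have equal intersection numbers with every other
   component, so two homologous components C_i, C_j have the same neighbours in
   the cycle outside {C_i, C_j}.  For k >= 3 this forces j = i+1 or i+2 and
   i = j+1 or j+2 (mod k), so k divides 2, 3 or 4: either k = 3, or k = 4 and
   C_j is opposite to C_i.  Neighbours are never opposite, and for them
   [C_i].[C_i] = [C_i].[C_{i+1}] gives the self-intersections. *)

Definition cycle_adj k (i j : 'I_k) : bool := (j == ordS i) || (i == ordS j).

Lemma cycle_meetE k (i j : 'I_k) : k != 2 -> cycle_meet i j = cycle_adj i j.
Proof.
by move=> /negbTE k2; rewrite /cycle_meet k2 -/(cycle_adj i j); case: cycle_adj.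
Qed.

Lemma uniq_size_ord k (s : seq 'I_k) : uniq s -> size s <= k.
Proof.
by move=> us; rewrite -[X in _ <= X]card_ord; apply/card_geqP; exists s.
Qed.

Lemma val_iter_ordS k (i : 'I_k) n : val (iter n (@ordS k) i) = (i + n) %% k.
Proof.
elim: n => [|n IHn] /=; first by rewrite addn0 modn_small.
by rewrite IHn -addn1 modnDml -addnA addn1.
Qed.

Lemma iter_ordS_id k (i : 'I_k) n : (iter n (@ordS k) i == i) = (k %| n).
Proof.
rewrite -val_eqE val_iter_ordS /= -[X in _ == X](modn_small (ltn_ord i)).
by rewrite -{2}[nat_of_ord i]addn0 eqn_modDl mod0n.
Qed.

Lemma ordS_neq k (i : 'I_k) : 1 < k -> ordS i != i.
Proof.
by move=> k_gt1; rewrite -[ordS i]/(iter 1 (@ordS k) i) iter_ordS_id dvdn1 gtn_eqF.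
Qed.

Lemma same_neighbours_succ k (i j : 'I_k) : 1 < k -> i != j ->
  (forall l, l != i -> l != j -> cycle_adj i l = cycle_adj j l) ->
  j = ordS i \/ j = ordS (ordS i).
Proof.
move=> k_gt1 ij same; have [<-|Sij] := eqVneq (ordS i) j; first by left.
have := same _ (ordS_neq i k_gt1) Sij; rewrite /cycle_adj eqxx /=.
case/esym/orP=> /eqP; last by right.
by move/ordS_inj/eqP; rewrite (negbTE ij).
Qed.

Lemma same_cycle_neighbours k (i j : 'I_k) : 2 < k -> i != j ->
  (forall l, l != i -> l != j -> cycle_adj i l = cycle_adj j l) ->
  k = 3 \/ (k = 4 /\ j = ordS (ordS i)).
Proof.
move=> k_gt2 ij same; have k_gt1 : 1 < k by apply: ltnW.
have ji : j != i by rewrite eq_sym.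
have same' l : l != j -> l != i -> cycle_adj j l = cycle_adj i l.
  by move=> lj li; rewrite same.
have cycle n : iter n (@ordS k) i = i -> k %| n by move/eqP; rewrite iter_ordS_id.
have [ej|ej] := same_neighbours_succ k_gt1 ij same;
  have [ei|ei] := same_neighbours_succ k_gt1 ji same'.
- have /dvdn_leq : k %| 2 by apply: cycle; rewrite /= -ej -ei.
  by move/(_ isT); rewrite leqNgt k_gt2.
- have /dvdn_leq : k %| 3 by apply: cycle; rewrite /= -ej -ei.
  by move/(_ isT) => k_le3; left; apply/eqP; rewrite eqn_leq k_le3.
- have /dvdn_leq : k %| 3 by apply: cycle; rewrite /= -ej -ei.
  by move/(_ isT) => k_le3; left; apply/eqP; rewrite eqn_leq k_le3.
- have k4 : k %| 4 by apply: cycle; rewrite /= -ej -ei.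
  have [k3|k_neq3] := eqVneq k 3; first by left.
  right; split => //; apply/eqP; rewrite eqn_leq dvdn_leq //=.
  by rewrite ltn_neqAle eq_sym k_neq3.
Qed.

Section HomologousComponents.

Variables (H : zmodType) (form : H -> H -> int) (k : nat) (C : 'I_k -> H).
Hypothesis hmeet : forall i j : 'I_k, i != j -> form (C i) (C j) = (cycle_meet i j)%:Z%R.

Lemma homologous_meet (i j l : 'I_k) : C i = C j -> l != i -> l != j ->
  cycle_meet i l = cycle_meet j l.
Proof.
move=> Cij li lj; apply/eqP.
by rewrite -eqz_nat -hmeet 1?eq_sym // -hmeet 1?eq_sym // Cij.
Qed.

Lemma homologous_self_intersection (i j : 'I_k) : i != j -> C i = C j ->
  form (C i) (C i) = (cycle_meet i j)%:Z%R.
Proof. by move=> ij Cij; rewrite {2}Cij hmeet. Qed.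

Lemma homologous_pair (i j : 'I_k) : 2 < k -> i != j -> C i = C j ->
  k = 3 \/ (k = 4 /\ j = ordS (ordS i)).
Proof.
move=> k_gt2 ij Cij; apply: same_cycle_neighbours => // l li lj.
have k_neq2 : k != 2 by rewrite gtn_eqF.
have := homologous_meet Cij li lj; rewrite !cycle_meetE //.
by do 2 case: cycle_adj.
Qed.

Lemma homologous_triple (i j l : 'I_k) : uniq [:: i; j; l] ->
  C i = C j -> C i = C l -> k = 3.
Proof.
move=> u Cij Cil; have k_gt2 : 2 < k := uniq_size_ord u.
move: u; rewrite /= !inE negb_or => /and3P[/andP[ij il] jl _].
have [//|[_ ej]] := homologous_pair k_gt2 ij Cij.
have [//|[_ el]] := homologous_pair k_gt2 il Cil.
by rewrite ej el eqxx in jl.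
Qed.

End HomologousComponents.

Local Open Scope ring_scope.

Theorem lemma2p5 (H : zmodType) (form : H -> H -> int)
  (hform : intersection_form form)
  (k : nat) (hk : (2 <= k)%N) (C : 'I_k -> H)
  (hmeet : forall i j : 'I_k, i != j -> form (C i) (C j) = (cycle_meet i j)%:Z) :
  (* (1) at most three components are homologous ... *)
  (~ exists i j l m : 'I_k,
       [/\ uniq [:: i; j; l; m], C i = C j, C i = C l & C i = C m]) /\
  (* ... and three homologous components only if r(D) = 3 *)
  (forall i j l : 'I_k, uniq [:: i; j; l] -> C i = C j -> C i = C l -> k = 3%N) /\
  (* (2) a pair of homologous components only if r(D) <= 4 *)
  (forall i j : 'I_k, i != j -> C i = C j -> (k <= 4)%N) /\
  (* (3) [C_i] = [C_{i+1}] forces r(D) = 3, s_i = s_{i+1} = 1 or r(D) = 2, s_i = s_{i+1} = 2 *)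
  (forall i : 'I_k, C i = C (ordS i) ->
     (k = 3%N /\ form (C i) (C i) = 1 /\ form (C (ordS i)) (C (ordS i)) = 1) \/
     (k = 2%N /\ form (C i) (C i) = 2 /\ form (C (ordS i)) (C (ordS i)) = 2)).
Proof.
have triple := homologous_triple hmeet; have pair := homologous_pair hmeet.
split.
  move=> [i [j [l [m [u Cij Cil _]]]]].
  have k3 : k = 3%N by apply: triple Cij Cil; apply: subseq_uniq u; apply: prefix_subseq.
  by have := uniq_size_ord u; rewrite [X in (_ <= X)%N]k3.
split; first exact: triple.
split.
  move=> i j ij Cij; have [k_gt2|k_le2] := ltnP 2 k; last exact: leq_trans k_le2 _.
  by have [k3|[k4 _]] := pair i j k_gt2 ij Cij; rewrite ?k3 ?k4.
move=> i Cio; have io : i != ordS i by rewrite eq_sym ordS_neq.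
rewrite -Cio (homologous_self_intersection hmeet io Cio) /cycle_meet eqxx /=.
have [k2|k_neq2] := eqVneq k 2%N; [by right | left].
have k_gt2 : (2 < k)%N by rewrite ltn_neqAle eq_sym k_neq2.
have [//|[_ /ordS_inj ei]] := pair i (ordS i) k_gt2 io Cio.
by rewrite -ei eqxx in io.
Qed.
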